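(* Let $S$ be a semiring, let $f:L\to M$ and $g:L\to N$ be morphisms of left $S$-semimodules, and let $(g',f';P)$ be a pushout of $(f,g)$, with $g':M\to P$, $f':N\to P$, $g'\circ f=f'\circ g$. Then: (1) if $f$ is surjective, then $f'$ is surjective; (2) if $f$ is $i$-normal (i.e. $f(L)\subseteq M$ is subtractive), then $f'$ is $i$-normal (i.e. $f'(N)\subseteq P$ is subtractive); (3) if $f$ is a normal epimorphism, then $f'$ is a normal epimorphism; (4) if $f$ is injective and $g$ is a normal epimorphism, then $f'$ is injective.
   Context: A semiring $(S,+,0,\cdot,1)$ consists of a commutative monoid $(S,+,0)$ and a monoid $(S,\cdot,1)$ with $0\neq 1$, absorbing zero and both distributive laws; left $S$-semimodules and $S$-linear maps are as for modules over rings (without subtraction). For an $S$-linear map $h:X\to Y$, $\mathrm{Ker}(h)=\{x\in X\mid h(x)=0\}$. $h$ is $k$-normal if $h(x)=h(x')$ implies $x+k=x'+k'$ for some $k,k'\in\mathrm{Ker}(h)$; $h$ is $i$-normal if $h(X)=\overline{h(X)}$, where for $A\subseteq Y$ the subtractive closure is $\overline{A}=\{y\in Y\mid y+a=a'\text{ for some }a,a'\in A\}$ (a subsemimodule $A$ is subtractive if $A=\overline A$). A normal epimorphism is a surjective $k$-normal $S$-linear map. A pushout of $(f,g)$ is a triple $(g',f';P)$ with $S$-linear $g':M\to P$, $f':N\to P$, $g'\circ f=f'\circ g$, such that for every $Q$ and $S$-linear $g^*:M\to Q$, $f^*:N\to Q$ with $g^*\circ f=f^*\circ g$ there is a unique $S$-linear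 $\varphi:P\to Q$ with $\varphi\circ g'=g^*$, $\varphi\circ f'=f^*$. *)

From HB Require Import structures.
From mathcomp Require Import all_boot all_algebra.
Set Implicit Arguments. Unset Strict Implicit. Unset Printing Implicit Defensive.
Import GRing.Theory.
Local Open Scope ring_scope.

Section SemiModDefs.
Variable S : nzSemiRingType.

Definition Ker (X Y : lSemiModType S) (h : {linear X -> Y}) : X -> Prop :=
  fun x => h x = 0.

Definition Im (X Y : lSemiModType S) (h : {linear X -> Y}) : Y -> Prop :=
  fun y => exists x, h x = y.

Definition sub_closure (Y : lSemiModType S) (A : Y -> Prop) : Y -> Prop :=
  fun y => exists a a', A a /\ A a' /\ y + a = a'.

Definition k_normal (X Y : lSemiModType S) (h : {linear X -> Y}) : Prop :=
  forall x x', h x = h x' ->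
    exists k k', Ker h k /\ Ker h k' /\ x + k = x' + k'.

Definition i_normal (X Y : lSemiModType S) (h : {linear X -> Y}) : Prop :=
  forall y, Im h y <-> sub_closure (Im h) y.

Definition normal_epi (X Y : lSemiModType S) (h : {linear X -> Y}) : Prop :=
  (forall y, exists x, h x = y) /\ k_normal h.

Definition is_pushout (L M N P : lSemiModType S)
  (f : {linear L -> M}) (g : {linear L -> N})
  (g' : {linear M -> P}) (f' : {linear N -> P}) : Prop :=
  (forall l, g' (f l) = f' (g l)) /\
  forall (Q : lSemiModType S) (gs : {linear M -> Q}) (fs : {linear N -> Q}),
    (forall l, gs (f l) = fs (g l)) ->
    exists phi : {linear P -> Q},
      ((forall m, phi (g' m) = gs m) /\ (forall n, phi (f' n) = fs n)) /\
      forall psi : {linear P -> Q},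
        (forall m, psi (g' m) = gs m) -> (forall n, psi (f' n) = fs n) ->
        forall p, psi p = phi p.

End SemiModDefs.

(* Every element of the pushout P has the form g' m + f' n: the sub-semimodule of
   such elements receives M and N compatibly, so by uniqueness in the universal
   property it is all of P.  The other statements are obtained by testing P against
   Bourne quotients V/K, where x ~ y iff x + k = y + k' for some k, k' in K.
   Mapping P to M/f(L) shows that f'(N) is subtractive whenever f(L) is.  A normal
   epimorphism is the cokernel of its kernel, so when f is one, N -> N/g(Ker f)
   extends to P; hence f' n = f' n' forces n ~ n' modulo g(Ker f), which lies in
   Ker f'.  Exchanging the roles of f and g, f' (g l) = f' (g l') gives
   f l ~ f l' modulo f(Ker g), and injectivity of f then yields g l = g l'. *)

From HB Require Import structures.
From mathcomp Require Import all_boot all_algebra.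
From mathcomp Require Import boolp.
Set Implicit Arguments. Unset Strict Implicit. Unset Printing Implicit Defensive.
Import GRing.Theory.
Local Open Scope ring_scope.
Local Open Scope quotient_scope.

Section Subsemimodule.
Variables (S : nzSemiRingType) (V : lSemiModType S) (A : submodClosed V).
Record subsemimod := Subsemimod { subsemimod_val :> V; _ : subsemimod_val \in A }.
HB.instance Definition _ := [isSub for subsemimod_val].
HB.instance Definition _ := [Choice of subsemimod by <:].
HB.instance Definition _ := [SubChoice_isSubLSemiModule of subsemimod by <:].

Variables (X : lSemiModType S) (h : {linear X -> V}) (hA : forall x, h x \in A).

Definition corestrict (x : X) : subsemimod := Subsemimod (hA x).

Lemma corestrict_semilinear : semilinear corestrict.
Proof. by split=> [a x|x y]; apply: val_inj; rewrite /= ?linearZ_LR ?linearD. Qed.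
HB.instance Definition _ :=
  GRing.isSemilinear.Build S X subsemimod *:%R corestrict corestrict_semilinear.

End Subsemimodule.

Section BourneQuotient.
Variables (S : nzSemiRingType) (V : lSemiModType S) (K : submodClosed V).

Definition bourne (x y : V) : Prop :=
  exists k k', [/\ k \in K, k' \in K & x + k = y + k'].

Lemma bourne_refl x : bourne x x.
Proof. by exists 0, 0; rewrite rpred0. Qed.

Lemma bourne_sym x y : bourne x y -> bourne y x.
Proof. by case=> k [k' [Kk Kk' e]]; exists k', k. Qed.

Lemma bourne_trans y x z : bourne x y -> bourne y z -> bourne x z.
Proof.
case=> k [k' [Kk Kk' exy]] [j [j' [Kj Kj' eyz]]].
exists (k + j), (k' + j'); split; rewrite ?rpredD //.
by rewrite addrA exy addrAC eyz addrAC addrA.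
Qed.

Lemma bourneD x1 y1 x2 y2 :
  bourne x1 y1 -> bourne x2 y2 -> bourne (x1 + x2) (y1 + y2).
Proof.
case=> k [k' [Kk Kk' e1]] [j [j' [Kj Kj' e2]]].
exists (k + j), (k' + j'); split; rewrite ?rpredD //.
by rewrite addrACA e1 e2 addrACA.
Qed.

Lemma bourneZ a x y : bourne x y -> bourne (a *: x) (a *: y).
Proof.
case=> k [k' [Kk Kk' e]].
by exists (a *: k), (a *: k'); split; rewrite ?rpredZ // -!scalerDr e.
Qed.

Definition bourne_rel : rel V := fun x y => `[< bourne x y >].

Lemma bourne_rel_equiv : equiv_class_of bourne_rel.
Proof.
split=> [x|x y|y x z]; rewrite /bourne_rel.
- exact/asboolP/bourne_refl.
- by apply/asboolP/asboolP; apply: bourne_sym.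
- by move=> /asboolP bxy /asboolP byz; apply/asboolP/(bourne_trans bxy).
Qed.

Definition bourne_equiv := EquivRelPack bourne_rel_equiv.

Definition bourne_quot := {eq_quot bourne_equiv}.
HB.instance Definition _ := Choice.on bourne_quot.

Definition bourne_proj (x : V) : bourne_quot := \pi x.

Lemma bourne_projP x y : bourne_proj x = bourne_proj y <-> bourne x y.
Proof.
by split=> [/(@eqquotP _ _ bourne_quot)/asboolP | /asboolP/(@eqquotP _ _ bourne_quot)].
Qed.

Lemma bourne_repr x : bourne (repr (bourne_proj x)) x.
Proof. by apply/bourne_projP; rewrite /bourne_proj reprK. Qed.

Definition bourne_add := lift_op2 bourne_quot +%R.

Lemma pi_bourne_add : {morph \pi_bourne_quot : x y / x + y >-> bourne_add x y}.
Proof.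
move=> x y; unlock bourne_add; apply/bourne_projP.
exact/bourne_sym/bourneD/bourne_repr/bourne_repr.
Qed.
Canonical pi_bourne_add_morph := PiMorph2 pi_bourne_add.

Definition bourne_scale a := lift_op1 bourne_quot ( *:%R a).

Lemma pi_bourne_scale a : {morph \pi_bourne_quot : x / a *: x >-> bourne_scale a x}.
Proof.
move=> x; unlock bourne_scale; apply/bourne_projP.
exact/bourne_sym/bourneZ/bourne_repr.
Qed.
Canonical pi_bourne_scale_morph a := PiMorph1 (pi_bourne_scale a).

Definition bourne_zero : bourne_quot := \pi 0.

Lemma bourne_addA : associative bourne_add.
Proof. by do 3!elim/quotW=> ?; rewrite !piE addrA. Qed.
Lemma bourne_addC : commutative bourne_add.
Proof. by do 2!elim/quotW=> ?; rewrite !piE addrC. Qed.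
Lemma bourne_add0 : left_id bourne_zero bourne_add.
Proof. by elim/quotW=> ?; rewrite !piE add0r. Qed.
HB.instance Definition _ :=
  GRing.isNmodule.Build bourne_quot bourne_addA bourne_addC bourne_add0.

Lemma bourne_scaleA a b x : bourne_scale a (bourne_scale b x) = bourne_scale (a * b) x.
Proof. by elim/quotW: x => x; rewrite !piE scalerA. Qed.
Lemma bourne_scale0 x : bourne_scale 0 x = 0.
Proof. by elim/quotW: x => x; rewrite !piE scale0r. Qed.
Lemma bourne_scale1 : left_id 1 bourne_scale.
Proof. by elim/quotW=> x; rewrite !piE scale1r. Qed.
Lemma bourne_scaleDr : right_distributive bourne_scale +%R.
Proof. by move=> a; do 2!elim/quotW=> ?; rewrite !piE scalerDr. Qed.
Lemma bourne_scaleDl x : {morph bourne_scale^~ x : a b / a + b}.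
Proof. by elim/quotW: x => x a b; rewrite !piE scalerDl. Qed.
HB.instance Definition _ := GRing.Nmodule_isLSemiModule.Build S bourne_quot
  bourne_scaleA bourne_scale0 bourne_scale1 bourne_scaleDr bourne_scaleDl.

Lemma bourne_proj_semilinear : semilinear bourne_proj.
Proof. by split=> [a x|x y]; [apply: pi_bourne_scale | apply: pi_bourne_add]. Qed.
HB.instance Definition _ :=
  GRing.isSemilinear.Build S V bourne_quot *:%R bourne_proj bourne_proj_semilinear.

Lemma bourne_proj_eq0 k : k \in K -> bourne_proj k = 0.
Proof. by move=> Kk; apply/bourne_projP; exists 0, k; rewrite rpred0 add0r addr0. Qed.

End BourneQuotient.

Section ImagesAndKernels.
Variables (S : nzSemiRingType) (X Y : lSemiModType S).
Implicit Types (h : {linear X -> Y}) (A : submodClosed X).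

Definition kernel h : {pred X} := [pred x | h x == 0].

Lemma kernel_closed h : subsemimod_closed (kernel h).
Proof.
split; [split|] => [|x y|a x]; rewrite !inE ?linear0 //.
  by move=> /eqP hx0 /eqP hy0; rewrite linearD hx0 hy0 addr0.
by move=> /eqP hx0; rewrite linearZ_LR hx0 scaler0.
Qed.
HB.instance Definition _ h :=
  GRing.isSubSemiModClosed.Build S X (kernel h) (kernel_closed h).

Definition image_of h (A : {pred X}) : {pred Y} :=
  [pred y | `[< exists2 x, x \in A & h x = y >]].

Lemma image_ofP h (A : {pred X}) y :
  reflect (exists2 x, x \in A & h x = y) (y \in image_of h A).
Proof. exact: asboolP. Qed.

Lemma image_of_closed h A : subsemimod_closed (image_of h A).
Proof.
split; [split|] => [|y y'|a y].
- by apply/image_ofP; exists 0; rewrite ?rpred0 ?linear0.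
- move=> /image_ofP [x Ax <-] /image_ofP [x' Ax' <-].
  by apply/image_ofP; exists (x + x'); rewrite ?rpredD ?linearD.
- move=> /image_ofP [x Ax <-].
  by apply/image_ofP; exists (a *: x); rewrite ?rpredZ ?linearZ_LR.
Qed.
HB.instance Definition _ h A :=
  GRing.isSubSemiModClosed.Build S Y (image_of h A) (image_of_closed h A).

Definition range_of h : {pred Y} := [pred y | `[< Im h y >]].

Lemma range_ofP h y : reflect (Im h y) (y \in range_of h).
Proof. exact: asboolP. Qed.

Lemma range_of_closed h : subsemimod_closed (range_of h).
Proof.
split; [split|] => [|y y'|a y].
- by apply/range_ofP; exists 0; rewrite linear0.
- move=> /range_ofP [x <-] /range_ofP [x' <-].
  by apply/range_ofP; exists (x + x'); rewrite linearD.
- by move=> /range_ofP [x <-]; apply/range_ofP; exists (a *: x); rewrite linearZ_LR.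
Qed.
HB.instance Definition _ h :=
  GRing.isSubSemiModClosed.Build S Y (range_of h) (range_of_closed h).

End ImagesAndKernels.

Section SumRange.
Variables (S : nzSemiRingType) (M N P : lSemiModType S).
Variables (u : {linear M -> P}) (v : {linear N -> P}).

Definition sum_range : {pred P} := [pred p | `[< exists m n, u m + v n = p >]].

Lemma sum_rangeP p : reflect (exists m n, u m + v n = p) (p \in sum_range).
Proof. exact: asboolP. Qed.

Lemma sum_range_closed : subsemimod_closed sum_range.
Proof.
split; [split|] => [|p p'|a p].
- by apply/sum_rangeP; exists 0, 0; rewrite !linear0 addr0.
- move=> /sum_rangeP [m [n <-]] /sum_rangeP [m' [n' <-]].
  by apply/sum_rangeP; exists (m + m'), (n + n'); rewrite !linearD addrACA.
- move=> /sum_rangeP [m [n <-]].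
  by apply/sum_rangeP; exists (a *: m), (a *: n); rewrite !linearZ_LR scalerDr.
Qed.
HB.instance Definition _ :=
  GRing.isSubSemiModClosed.Build S P sum_range sum_range_closed.

End SumRange.

Lemma normal_epi_factor (S : nzSemiRingType) (L N W : lSemiModType S)
    (g : {linear L -> N}) (h : {linear L -> W}) :
  normal_epi g -> (forall k, Ker g k -> h k = 0) ->
  exists h' : {linear N -> W}, forall l, h' (g l) = h l.
Proof.
case=> g_surj g_knormal h_ker.
have h_compat l l' : g l = g l' -> h l = h l'.
  case/g_knormal=> k [k' [gk [gk' e]]].
  by have := congr1 h e; rewrite !linearD (h_ker _ gk) (h_ker _ gk') !addr0.
have [sec secK] := choice g_surj.
have h'_semilinear : semilinear (h \o sec).
  by split=> [a n|n n'] /=; [rewrite -linearZ_LR | rewrite -linearD];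
    apply: h_compat; rewrite ?linearZ_LR ?linearD !secK.
exists (HB.pack_for {linear N -> W} (h \o sec)
  (GRing.isSemilinear.Build _ _ _ _ _ h'_semilinear)).
by move=> l /=; apply: h_compat; rewrite secK.
Qed.

Section Pushout.
Variables (S : nzSemiRingType) (L M N P : lSemiModType S).
Variables (f : {linear L -> M}) (g : {linear L -> N}).
Variables (g' : {linear M -> P}) (f' : {linear N -> P}).
Hypothesis PO : is_pushout f g g' f'.

Lemma pushout_comm l : g' (f l) = f' (g l).
Proof. by case: PO. Qed.

Lemma pushout_lift (Q : lSemiModType S) (u : {linear M -> Q}) (v : {linear N -> Q}) :
  (forall l, u (f l) = v (g l)) ->
  exists phi : {linear P -> Q},
    (forall m, phi (g' m) = u m) /\ (forall n, phi (f' n) = v n).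
Proof.
case: PO => _ UP /UP [phi [phiP _]].
by exists phi.
Qed.

Lemma pushout_ext (Q : lSemiModType S) (psi1 psi2 : {linear P -> Q}) :
  (forall m, psi1 (g' m) = psi2 (g' m)) -> (forall n, psi1 (f' n) = psi2 (f' n)) ->
  psi1 =1 psi2.
Proof.
move=> eq_g' eq_f' p; case: PO => _ UP.
have [phi [_ phi_uniq]] :=
  UP Q (psi1 \o g') (psi1 \o f') (fun l => congr1 psi1 (pushout_comm l)).
by rewrite (phi_uniq psi1) ?(phi_uniq psi2) // => x /=; rewrite ?eq_g' ?eq_f'.
Qed.

Lemma pushout_cover p : exists m n, g' m + f' n = p.
Proof.
have g'_in m : g' m \in sum_range g' f'.
  by apply/sum_rangeP; exists m, 0; rewrite linear0 addr0.
have f'_in n : f' n \in sum_range g' f'.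
  by apply/sum_rangeP; exists 0, n; rewrite linear0 add0r.
have compat l : corestrict g'_in (f l) = corestrict f'_in (g l).
  by apply: val_inj; apply: pushout_comm.
have [phi [phi_g' phi_f']] := pushout_lift compat.
have val_phi : (val \o phi : {linear P -> P}) =1 idfun.
  by apply: pushout_ext => [m|n] /=; rewrite ?phi_g' ?phi_f'.
by apply/sum_rangeP; rewrite -[p]val_phi; apply: valP.
Qed.

Lemma pushout_surj : (forall m, exists l, f l = m) -> forall p, exists n, f' n = p.
Proof.
move=> f_surj p; have [m [n <-]] := pushout_cover p; have [l <-] := f_surj m.
by exists (g l + n); rewrite linearD pushout_comm.
Qed.

Lemma pushout_i_normal : i_normal f -> i_normal f'.
Proof.
move=> f_inormal y; split.
  by move=> f'y; exists 0, y; split; [exists 0; rewrite linear0 | rewrite addr0].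
case=> _ [_ [[n0 <-] [[n1 <-]]]]; have [m [n <-]] := pushout_cover y => y_sub.
have proj_f l : bourne_proj (range_of f) (f l) = \0 (g l).
  by apply/bourne_proj_eq0/range_ofP; exists l.
have [phi [phi_g' phi_f']] := pushout_lift proj_f.
have /bourne_projP [k [k' [/range_ofP fk /range_ofP fk' m_sub]]] :
    bourne_proj (range_of f) m = bourne_proj (range_of f) 0.
  by have := congr1 phi y_sub; rewrite !linearD !phi_g' !phi_f' linear0 !addr0.
have [l <-] : Im f m by apply/f_inormal; exists k, k'; rewrite m_sub add0r.
by exists (g l + n); rewrite linearD pushout_comm.
Qed.

Lemma pushout_eq_bourne : normal_epi f ->
  forall n n', f' n = f' n' -> bourne (image_of g (kernel f)) n n'.
Proof.
move=> f_epi n n' eq_f'.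
pose q := bourne_proj (image_of g (kernel f)).
have q_ker k : Ker f k -> (q \o g) k = 0.
  by move=> fk0; apply/bourne_proj_eq0/image_ofP; exists k; rewrite ?inE ?fk0.
have [h hf] := normal_epi_factor f_epi q_ker.
have [phi [_ phi_f']] := pushout_lift hf.
by apply/bourne_projP; rewrite -!phi_f' eq_f'.
Qed.

Lemma pushout_normal_epi : normal_epi f -> normal_epi f'.
Proof.
move=> f_epi; split; first by apply: pushout_surj; case: f_epi.
move=> n n' /(pushout_eq_bourne f_epi) [k [k' [gk gk' e]]].
have f'_ker x : x \in image_of g (kernel f) -> f' x = 0.
  by case/image_ofP=> l; rewrite inE => /eqP fl0 <-; rewrite -pushout_comm fl0 linear0.
by exists k, k'; rewrite /Ker !f'_ker.
Qed.

End Pushout.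

Lemma pushout_sym (S : nzSemiRingType) (L M N P : lSemiModType S)
    (f : {linear L -> M}) (g : {linear L -> N})
    (g' : {linear M -> P}) (f' : {linear N -> P}) :
  is_pushout f g g' f' -> is_pushout g f f' g'.
Proof.
case=> comm UP; split=> [l|Q u v uv]; first by rewrite comm.
have [phi [[phi_g' phi_f'] phi_uniq]] := UP Q v u (fun l => esym (uv l)).
by exists phi; split=> // psi psi_f' psi_g'; apply: phi_uniq.
Qed.

Lemma pushout_inj (S : nzSemiRingType) (L M N P : lSemiModType S)
    (f : {linear L -> M}) (g : {linear L -> N})
    (g' : {linear M -> P}) (f' : {linear N -> P}) :
  is_pushout f g g' f' -> injective f -> normal_epi g -> injective f'.
Proof.
move=> PO f_inj g_epi n1 n2; have [g_surj _] := g_epi.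
have [[l1 <-] [l2 <-]] := (g_surj n1, g_surj n2).
rewrite -!(pushout_comm PO) => /(pushout_eq_bourne (pushout_sym PO) g_epi).
case=> _ [_ [/image_ofP [k gk <-] /image_ofP [k' gk' <-] e]].
move: gk gk'; rewrite !inE => /eqP gk /eqP gk'.
rewrite -!linearD in e; have := congr1 g (f_inj _ _ e).
by rewrite !linearD gk gk' !addr0.
Qed.

Theorem mainTheorem3 (S : nzSemiRingType) (L M N P : lSemiModType S)
  (f : {linear L -> M}) (g : {linear L -> N})
  (g' : {linear M -> P}) (f' : {linear N -> P}) :
  is_pushout f g g' f' ->
  [/\ (forall m : M, exists l : L, f l = m) -> (forall p : P, exists n : N, f' n = p),
      i_normal f -> i_normal f',
      normal_epi f -> normal_epi f'
    & (forall l1 l2 : L, f l1 = f l2 -> l1 = l2) -> normal_epi g ->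
      (forall n1 n2 : N, f' n1 = f' n2 -> n1 = n2)].
Proof.
move=> PO; split.
- exact: pushout_surj PO.
- exact: pushout_i_normal PO.
- exact: pushout_normal_epi PO.
- exact: pushout_inj PO.
Qed.
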